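(* In the $2$-coloured operad $\mathrm{Bulle}$, the set $G$ of the eight bubbles of arity $2$ is the generating set of $\mathrm{Bulle}$. That is, the smallest coloured suboperad of $\mathrm{Bulle}$ containing $G$ is $\mathrm{Bulle}$ itself, and $G$ is minimal for inclusion with this property.
   Context: The $2$-coloured operad $\mathrm{Bulle}$ can be described as follows. For $n\ge2$, its elements of arity $n$ (called bubbles) are the pairs $(c;d_1\cdots d_n)$ with $c\in\{1,2\}$ and $d_1,\dots,d_n\in\{1,2\}$, with output colour $c$ and $i$th input colour $d_i$. In addition, there are two units $\mathbf 1_1,\mathbf 1_2$ of arity $1$, where $\mathbf 1_c$ has output and input colour $c$. The partial composition $(c;d_1\cdots d_n)\circ_i(e;f_1\cdots f_m)$ is defined exactly when $d_i=e$, and equals $(c;d_1\cdots d_{i-1}f_1\cdots f_m d_{i+1}\cdots d_n)$. Geometrically, a bubble of arity $n$ is a polygon with $n+1$ vertices whose base and $n$ edges are each either blue or uncoloured, with no coloured diagonals. The output colour is $1$ iff the base is blue, and the $i$th input colour is $2$ iff the $i$th edge is blue. Composition glues the base of the second bubble onto the $i$th edge of the first. A coloured suboperad is a subset closed under defined compositions and containing both units. *)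

From mathcomp Require Import all_boot.
Set Implicit Arguments. Unset Strict Implicit. Unset Printing Implicit Defensive.

Inductive colour := col1 | col2.

(* A candidate element (c ; d_1 ... d_n) : output colour and list of input colours. *)
Record belem := Belem { out : colour; ins : seq colour }.

Definition is_bulle (x : belem) : Prop :=
  2 <= size (ins x) \/ ins x = [:: out x].

Definition arity (x : belem) : nat := size (ins x).

Definition unit_el (c : colour) : belem := Belem c [:: c].

(* Partial composition x o_{i+1} y (0-based index i), defined when the
   (i+1)-th input colour of x equals the output colour of y. *)
Definition comp (x : belem) (i : nat) (y : belem) : belem :=
  Belem (out x) (take i (ins x) ++ ins y ++ drop i.+1 (ins x)).

Definition comp_defined (x : belem) (i : nat) (y : belem) : Prop :=
  i < size (ins x) /\ nth col1 (ins x) i = out y.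

Definition suboperad (S : belem -> Prop) : Prop :=
  (forall x, S x -> is_bulle x) /\
  (forall c, S (unit_el c)) /\
  (forall x y i, S x -> S y -> comp_defined x i y -> S (comp x i y)).

Definition generated (G : belem -> Prop) (x : belem) : Prop :=
  forall S, suboperad S -> (forall g, G g -> S g) -> S x.

Definition arity2 (x : belem) : Prop := is_bulle x /\ arity x = 2.

(** Every bubble of arity [n + 3] is a bubble of arity [2] composed in its
    second input with a bubble of arity [n + 2], so by induction on the arity
    the arity-2 bubbles generate [Bulle].  Conversely, the arity of a composite
    is one less than the sum of the arities, so an arity-2 element of [Bulle]
    only arises by composing with a unit, which gives it back.  Hence the
    elements of [Bulle] that lie in [H] whenever they have arity 2 form a
    suboperad containing [H]; if [H] generates [Bulle], it therefore contains
    every arity-2 bubble. *)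

From mathcomp Require Import all_boot zify.

Set Implicit Arguments.
Unset Strict Implicit.
Unset Printing Implicit Defensive.

Lemma generated_unit G c : generated G (unit_el c).
Proof. by move=> S [_ [S_unit _]] _; apply: S_unit. Qed.

Lemma generated_comp G x i y :
  generated G x -> generated G y -> comp_defined x i y ->
  generated G (comp x i y).
Proof.
move=> Gx Gy xiy S S_sub GS; have [_ [_ S_comp]] := S_sub.
by apply: (S_comp x y i) xiy; [apply: Gx | apply: Gy].
Qed.

Lemma arity_gt0 x : is_bulle x -> 0 < arity x.
Proof. by rewrite /arity; case=> [/ltnW|->]. Qed.

Lemma arity1_unit x : is_bulle x -> arity x = 1 -> x = unit_el (out x).
Proof. by case: x => c s; rewrite /is_bulle /arity /= => -[|->] //; lia. Qed.

Lemma arity_comp x i y :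
  i < arity x -> (arity (comp x i y)).+1 = arity x + arity y.
Proof.
by rewrite /arity /= !size_cat size_take size_drop => lt_i; rewrite lt_i; lia.
Qed.

Lemma comp_unitl y : comp (unit_el (out y)) 0 y = y.
Proof. by case: y => c s; rewrite /comp /= cats0. Qed.

Lemma comp_unitr x i :
  i < arity x -> comp x i (unit_el (nth col1 (ins x) i)) = x.
Proof. by case: x => c s lt_i; rewrite /comp /= -drop_nth // cat_take_drop. Qed.

Lemma bubble_decomp c d1 d2 r :
  Belem c [:: d1, d2 & r] = comp (Belem c [:: d1; d2]) 1 (Belem d2 (d2 :: r)).
Proof. by rewrite /comp /= cats0. Qed.

Lemma comp_bulle_cases x i y :
  is_bulle x -> is_bulle y -> comp_defined x i y ->
  [\/ comp x i y = y, comp x i y = x | 3 <= arity (comp x i y)].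
Proof.
move=> Bx By [lt_i xiy]; have sum_ar := arity_comp y lt_i.
have ar_x := arity_gt0 Bx; have ar_y := arity_gt0 By.
have [lt1x|le_x1] := ltnP 1 (arity x); last first.
  have Ex : x = unit_el (out x) by apply: arity1_unit => //; lia.
  have i0 : i = 0 by move: lt_i le_x1; rewrite /arity; lia.
  by constructor 1; move: xiy; rewrite i0 Ex /= => ->; apply: comp_unitl.
have [lt1y|le_y1] := ltnP 1 (arity y); first by constructor 3; lia.
have Ey : y = unit_el (out y) by apply: arity1_unit => //; lia.
by constructor 2; rewrite Ey -xiy comp_unitr.
Qed.

Lemma comp_is_bulle x i y :
  is_bulle x -> is_bulle y -> comp_defined x i y -> is_bulle (comp x i y).
Proof.
move=> Bx By xiy; have [->|->|lt2] // := comp_bulle_cases Bx By xiy.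
by left; apply: ltnW.
Qed.

Lemma generated_arity2_bubble c s : 2 <= size s -> generated arity2 (Belem c s).
Proof.
elim: s c => [|d1 [|d2 r] IH] c //= _.
case: r IH => [|d3 r] IH; first by move=> S _ GS; apply: GS; split=> //; left.
rewrite bubble_decomp; apply: generated_comp; last by split.
  by move=> S _ GS; apply: GS; split=> //; left.
exact: IH.
Qed.

Lemma generated_arity2 x : is_bulle x -> generated arity2 x.
Proof.
case: x => c s [/generated_arity2_bubble //|/= ->].
exact: generated_unit.
Qed.

Lemma suboperad_arity2_in (H : belem -> Prop) :
  suboperad (fun x => is_bulle x /\ (arity x = 2 -> H x)).
Proof.
split; first by move=> x [].
split; first by move=> c; split; [right|].
move=> x y i [Bx Hx] [By Hy] xiy; split; first exact: comp_is_bulle.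
by have [->|->|lt2 ar2] // := comp_bulle_cases Bx By xiy; rewrite ar2 in lt2.
Qed.

Theorem proposition2p3 :
  (forall x, is_bulle x -> generated arity2 x) /\
  (forall H : belem -> Prop,
      (forall x, H x -> arity2 x) ->
      (forall x, is_bulle x -> generated H x) ->
      forall x, arity2 x -> H x).
Proof.
split; first exact: generated_arity2.
move=> H H_arity2 H_gen x [Bx ar2].
have H_sub g : H g -> is_bulle g /\ (arity g = 2 -> H g).
  by move=> Hg; split=> //; have [] := H_arity2 g Hg.
by have [_] := H_gen x Bx _ (suboperad_arity2_in H) H_sub; apply.
Qed.
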